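(* For the system $$u_{0,0}-v_{1,1}=0,\qquad (u_{1,0}-u_{0,0})(v_{1,0}-u_{0,0})-(u_{0,1}-u_{0,0})(v_{0,1}-u_{0,0})=0,$$ the pair $$\rho_2=\frac{v_{1,0}-v_{0,0}+u_{-1,0}-u_{-2,0}}{(v_{0,0}-u_{-2,0})(v_{1,0}-u_{-1,0})},\qquad \sigma_2=\frac{1}{v_{-1,0}-u_{-3,0}}\left(\frac{u_{-2,0}-u_{-3,0}}{u_{-1,0}-u_{-2,0}}+\frac{v_{-1,0}-2u_{-2,0}+u_{-3,0}}{v_{0,0}-u_{-2,0}}\right)$$ is a conservation law, i.e. $(\mathcal T-1)\rho_2=(\mathcal S-1)\sigma_2$ on solutions.
   Context: Unknowns $u,v$ on $\mathbb Z^2$, $u_{i,j}=u(n+i,m+j)$, similarly $v$. Shifts $\mathcal S:n\mapsto n+1$, $\mathcal T:m\mapsto m+1$, acting by $\mathcal S^k\mathcal T^\ell(f_{i,j})=f_{i+k,j+\ell}$. A conservation law is a pair $(\rho,\sigma)$ of functions of finitely many shifts of $(u,v)$ such that $(\mathcal T-1)\rho=(\mathcal S-1)\sigma$ holds for all solutions of the system (on which all denominators are nonzero). *)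

From HB Require Import structures.
From mathcomp Require Import all_boot all_order all_algebra.
Set Implicit Arguments. Unset Strict Implicit. Unset Printing Implicit Defensive.
Import Order.TTheory GRing.Theory Num.Theory.
Local Open Scope ring_scope.

(* Lattice fields u, v : Z^2 -> R ; u n m stands for u(n,m), so the shift
   u_{i,j} at base point (n,m) is u (n+i) (m+j). *)

Definition is_solution (R : numFieldType) (u v : int -> int -> R) : Prop :=
  forall n m : int,
    u n m - v (n + 1) (m + 1) = 0 /\
    (u (n + 1) m - u n m) * (v (n + 1) m - u n m)
      - (u n (m + 1) - u n m) * (v n (m + 1) - u n m) = 0.

Definition rho2 (R : numFieldType) (u v : int -> int -> R) (n m : int) : R :=
  (v (n + 1) m - v n m + u (n - 1) m - u (n - 2) m)
  / ((v n m - u (n - 2) m) * (v (n + 1) m - u (n - 1) m)).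

Definition sigma2 (R : numFieldType) (u v : int -> int -> R) (n m : int) : R :=
  (v (n - 1) m - u (n - 3) m)^-1 *
  ((u (n - 2) m - u (n - 3) m) / (u (n - 1) m - u (n - 2) m)
   + (v (n - 1) m - 2 * u (n - 2) m + u (n - 3) m) / (v n m - u (n - 2) m)).

Definition denominators_nonzero (R : numFieldType) (u v : int -> int -> R) : Prop :=
  forall n m : int,
    [/\ v n m - u (n - 2) m != 0,
        v (n + 1) m - u (n - 1) m != 0,
        v (n - 1) m - u (n - 3) m != 0
      & u (n - 1) m - u (n - 2) m != 0].

From HB Require Import structures.
From mathcomp Require Import all_boot all_order all_algebra.
From mathcomp Require Import ring.
Set Implicit Arguments. Unset Strict Implicit. Unset Printing Implicit Defensive.
Import Order.TTheory GRing.Theory Num.Theory.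
Local Open Scope ring_scope.

(* The first equation says that v is u shifted along the diagonal, so the
   row m + 1 of v is the row m of u shifted by one.  The second equation,
   with v eliminated, is a recursion giving the row m + 1 of u from the row m
   of u and v.  Substituting both, the conservation law becomes an identity
   between rational functions of the data on the row m alone. *)

Lemma solve_row_relation (F : fieldType) (a b c w x : F) :
  (x - b) * (a - b) = (c - b) * (w - b) -> a - b != 0 ->
  x = c + (c - b) * (w - a) / (a - b).
Proof.
move=> e hab; apply: (mulIf hab); rewrite mulrDl mulfVK //.
have -> : x * (a - b) = (x - b) * (a - b) + b * (a - b) by ring.
by rewrite e; ring.
Qed.

(* umk, u0 stand for u_{-k,0}, u_{0,0}; vm1, v0, v1 for v_{-1,0}, v_{0,0},
   v_{1,0}; Umk for u_{-k,1}.  The denominators of rho at the next row need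
   no hypothesis: by
   [solve_row_relation], u0 - Um1 and um1 - Um2 are products of nonzero
   factors, e.g. u0 - Um1 = (u0 - um1) (v0 - um2) / (um1 - um2). *)
Lemma conservation_identity (F : fieldType) (um3 um2 um1 u0 vm1 v0 v1 Um2 Um1 : F) :
  (Um1 - um1) * (um2 - um1) = (u0 - um1) * (v0 - um1) ->
  (Um2 - um2) * (um3 - um2) = (um1 - um2) * (vm1 - um2) ->
  um2 - um3 != 0 -> um1 - um2 != 0 -> u0 - um1 != 0 ->
  v0 - um2 != 0 -> v1 - um1 != 0 -> vm1 - um3 != 0 ->
  (u0 - um1 + Um1 - Um2) / ((um1 - Um2) * (u0 - Um1))
    - (v1 - v0 + um1 - um2) / ((v0 - um2) * (v1 - um1))
  = (v0 - um2)^-1 * ((um1 - um2) / (u0 - um1) + (v0 - 2 * um1 + um2) / (v1 - um1))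
    - (vm1 - um3)^-1 * ((um2 - um3) / (um1 - um2) + (vm1 - 2 * um2 + um3) / (v0 - um2)).
Proof.
move=> eUm1 eUm2 h32 h21 h10 hv0 hv1 hvm1.
have h12 : um2 - um1 != 0 by rewrite -oppr_eq0 opprB.
have h23 : um3 - um2 != 0 by rewrite -oppr_eq0 opprB.
rewrite (solve_row_relation eUm1 h12) (solve_row_relation eUm2 h23).
field.
by rewrite !opprD !addrA !subrr !add0r !oppr_eq0 hv0 h21 hvm1 hv1 h10 h12 h23 !mulf_neq0.
Qed.

Section Solutions.

Variables (R : numFieldType) (u v : int -> int -> R).
Hypothesis solution_uv : is_solution u v.

Lemma solution_v_shift (n m : int) : v n (m + 1) = u (n - 1) m.
Proof. by have [/subr0_eq -> _] := solution_uv (n - 1) m; rewrite subrK. Qed.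

Lemma solution_row_relation (n m : int) :
  (u (n - 1) (m + 1) - u (n - 1) m) * (u (n - 2) m - u (n - 1) m)
  = (u n m - u (n - 1) m) * (v n m - u (n - 1) m).
Proof.
have e : n - 1 - 1 = n - 2 by ring.
have [_ /subr0_eq] := solution_uv (n - 1) m.
by rewrite subrK solution_v_shift e => ->.
Qed.

End Solutions.

Theorem mainTheorem13 (R : numFieldType) (u v : int -> int -> R) :
  is_solution u v -> denominators_nonzero u v ->
  forall n m : int,
    rho2 u v n (m + 1) - rho2 u v n m = sigma2 u v (n + 1) m - sigma2 u v n m.
Proof.
move=> hs hd n m.
have [e1 e2 e3 e4 e5] : [/\ n + 1 - 1 = n, n + 1 - 2 = n - 1, n + 1 - 3 = n - 2,
                         n - 1 - 1 = n - 2 & n - 1 - 2 = n - 3] by split; ring.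
have [hv0 hv1 hvm1 h21] := hd n m.
have := hd (n + 1) m; rewrite e1 e2 => -[_ _ _ h10].
have := hd (n - 1) m; rewrite e4 e5 => -[_ _ _ h32].
rewrite /rho2 /sigma2 !(solution_v_shift hs) e1 e2 e3.
apply: conservation_identity => //; first exact: solution_row_relation.
by have := solution_row_relation hs (n - 1) m; rewrite e4 e5.
Qed.
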